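(* Let $X\in\sigma\mathcal F$ and $F\in\mathsf{age}(X)$. Then $\mathsf{rk}_X(F)=\infty$ if and only if Player II has a winning strategy in the rank game on $X$ starting from $F$.
   Context: Let $\mathcal L$ be a countable relational language without constants and $\mathcal F$ a hereditary, isomorphism-closed class of finite $\mathcal L$-structures. $\sigma\mathcal F$ is the class of countable structures isomorphic to unions of chains in $\mathcal F$; $\mathsf{age}(X)$ is the set of finite (induced) substructures of $X$. For $A\le B$, $B$ is a prime extension of $A$ if $|B\setminus A|=1$; a realization of $B$ in $X$ (where $A\le X$) is $C\le X$ with $A\le C$ and an isomorphism $B\to C$ fixing $A$ pointwise. For $F\in\mathsf{age}(X)$ define by recursion: $\mathsf{rk}_X(F)\ge0$ always; $\mathsf{rk}_X(F)\ge\alpha+1$ iff every prime extension $B\in\mathcal F$ of $F$ has a realization $C$ in $X$ with $\mathsf{rk}_X(C)\ge\alpha$; for limit $\alpha$, $\mathsf{rk}_X(F)\ge\alpha$ iff $\mathsf{rk}_X(F)\ge\beta$ for all $\beta<\alpha$. $\mathsf{rk}_X(F)=\sup\{\alpha:\mathsf{rk}_X(F)\ge\alpha\}$, and $\mathsf{rk}_X(F)=\infty$ if $\mathsf{rk}_X(F)\ge\alpha$ for every ordinal $\alpha$. The rank game on $X$ starting from $F$: players I and II play $\omega$ rounds; the position at round $n$ is $F_n\in\mathsf{age}(X)$ with $F_0=F$. In round $n$, I chooses a prime extension $B\in\mathcal F$ of $F_n$, and II responds with a realization $C$ of $B$ in $X$, setting $F_{n+1}=C$. II loses at round $n$ if no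 realization exists; II wins if the game lasts all $\omega$ rounds. *)

From mathcomp Require Import all_boot finmap.
Set Implicit Arguments.
Unset Strict Implicit.
Unset Printing Implicit Defensive.
Local Open Scope fset_scope.

Record lang := Lang { sym : countType; arity : sym -> nat }.

Definition rels (L : lang) (A : Type) :=
  forall s : sym L, ('I_(arity s) -> A) -> Prop.

Record fstruct (L : lang) := FStruct { fcar : finType; frel : rels L fcar }.
Arguments FStruct {L} fcar frel.
Arguments frel {L} f s t.

Definition is_embedding (L : lang) (A B : Type) (rA : rels L A) (rB : rels L B)
  (f : A -> B) : Prop :=
  injective f /\ forall (s : sym L) (t : 'I_(arity s) -> A), rA s t <-> rB s (f \o t).

Definition is_iso (L : lang) (A B : Type) (rA : rels L A) (rB : rels L B)
  (f : A -> B) : Prop :=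
  is_embedding rA rB f /\ forall y : B, exists x : A, f x = y.

Definition fsub (L : lang) (B : fstruct L) (P : pred (fcar B)) : fstruct L :=
  FStruct {x : fcar B | P x} (fun s t => @frel L B s (fun i => val (t i))).

Definition hereditary (L : lang) (F : fstruct L -> Prop) : Prop :=
  forall (B : fstruct L) (P : pred (fcar B)), F B -> F (fsub P).

Definition iso_closed (L : lang) (F : fstruct L -> Prop) : Prop :=
  forall (A B : fstruct L) (f : fcar A -> fcar B),
    is_iso (frel A) (frel B) f -> F A -> F B.

Section Rank.
Variables (L : lang) (F : fstruct L -> Prop).
Variables (T : countType) (X : rels L T).

(* The finite induced substructure of X on the finite subset S
   (the elements of age(X) are these substructures, i.e. finite subsets). *)
Definition sub_of (S : {fset T}) : fstruct L :=
  FStruct S (fun s t => @X s (fun i => val (t i))).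

Definition in_sigmaF : Prop :=
  exists c : nat -> {fset T},
    (forall n, c n `<=` c n.+1) /\
    (forall x : T, exists n, x \in c n) /\
    (forall n, F (sub_of (c n))).

(* A prime extension B in F of the substructure on S: a finite structure B
   in F together with an embedding of S into B (identifying S with a
   substructure of B) such that B has exactly one new element. *)
Record pext (S : {fset T}) := PExt {
  pB : fstruct L;
  pe : fcar (sub_of S) -> fcar pB;
  pe_emb : is_embedding (frel (sub_of S)) (frel pB) pe;
  pB_F : F pB;
  pB_card : #|fcar pB| = #|fcar (sub_of S)|.+1 }.

Definition realizes (S : {fset T}) (m : pext S) (C : {fset T}) : Prop :=
  S `<=` C /\
  exists f : fcar (pB m) -> fcar (sub_of C),
    is_iso (frel (pB m)) (frel (sub_of C)) f /\
    forall x : fcar (sub_of S), val (f (pe m x)) = val x.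

(* Ordinals are represented by well-ordered types. *)
Record wordered := WOrd {
  wcar : Type;
  wlt : wcar -> wcar -> Prop;
  wlt_wf : well_founded wlt;
  wlt_trans : forall x y z, wlt x y -> wlt y z -> wlt x z;
  wlt_total : forall x y, wlt x y \/ x = y \/ wlt y x }.

Definition is_pred (W : wordered) (v w : wcar W) : Prop :=
  wlt v w /\ forall u, wlt u w -> u = v \/ wlt u v.

(* rk_ge W S w  <->  rk_X(S) >= w, by recursion on w : zero / successor /
   limit, exactly as in the paper. *)
Inductive rk_ge (W : wordered) : {fset T} -> wcar W -> Prop :=
| rk_ge0 : forall S w, (forall v, ~ wlt v w) -> rk_ge S w
| rk_geS : forall S v w, is_pred v w ->
    (forall m : pext S, exists C, realizes m C /\ rk_ge C v) -> rk_ge S w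
| rk_geL : forall S w, (exists v, wlt v w) -> (forall v, ~ is_pred v w) ->
    (forall v, wlt v w -> rk_ge S v) -> rk_ge S w.

Definition rk_inf (S : {fset T}) : Prop :=
  forall (W : wordered) (w : wcar W), rk_ge S w.

(* The rank game starting from S0.  Histories ending at position P
   (the sequence of positions and of I's moves played so far). *)
Inductive hist (S0 : {fset T}) : {fset T} -> Type :=
| hist0 : hist S0 S0
| histS : forall P, hist S0 P -> pext P -> forall C : {fset T}, hist S0 C.

Definition strategyII (S0 : {fset T}) :=
  forall P (h : hist S0 P), pext P -> {fset T}.

Inductive consistent (S0 : {fset T}) (sigma : strategyII S0) :
  forall P, hist S0 P -> Prop :=
| cons0 : consistent sigma (hist0 S0)
| consS : forall P (h : hist S0 P) (m : pext P),
    consistent sigma h -> consistent sigma (histS h m (sigma P h m)).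

(* sigma is winning: along every play following sigma, II's response is
   always a realization of I's move, so II never loses and the game lasts
   omega rounds. *)
Definition winningII (S0 : {fset T}) (sigma : strategyII S0) : Prop :=
  forall P (h : hist S0 P), consistent sigma h ->
    forall m : pext P, realizes m (sigma P h m).

Definition II_wins (S0 : {fset T}) : Prop :=
  exists sigma : strategyII S0, winningII sigma.

End Rank.

From mathcomp Require Import all_boot finmap.
From Stdlib Require Import Classical ClassicalEpsilon.

(* If rk(F) = oo, II wins by always answering with a realization of infinite
   rank.  Such a realization exists: otherwise every realization C has some
   ordinal a_C with ~ rk(C) >= a_C, and rk(F) >= (sum_C a_C) + 2 yields a
   realization C with rk(C) >= (sum_C a_C) + 1 > a_C.  Conversely, if II has a
   winning strategy then, by induction on a, every position reached by it has
   rank >= a. *)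

Set Implicit Arguments.
Unset Strict Implicit.
Unset Printing Implicit Defensive.

Lemma wlt_between (W : wordered) (u w : wcar W) :
  wlt u w -> ~ is_pred u w -> exists2 x, wlt x w & wlt u x.
Proof.
move=> lt_uw not_pred; apply: NNPP => none; apply: not_pred; split=> // x lt_xw.
case: (wlt_total u x) => [lt_ux | [-> | lt_xu]]; by [case: none; exists x | left | right].
Qed.

Definition unit_word : wordered :=
  @WOrd unit (fun _ _ => False) (fun x => Acc_intro x (fun _ => False_ind _))
    (fun _ _ _ lt_xy _ => lt_xy) (fun 'tt 'tt => or_intror (or_introl erefl)).

Section Successor.
Variable W : wordered.

Definition succ_lt (a b : option (wcar W)) : Prop :=
  match a, b with
  | Some x, Some y => wlt x y
  | Some _, None => True
  | None, _ => False
  end.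

Lemma succ_lt_wf : well_founded succ_lt.
Proof.
have Some_acc x : Acc succ_lt (Some x).
  elim/(well_founded_ind (@wlt_wf W)): x => x IH.
  by constructor=> -[y /IH | []].
case=> [x|]; first exact: Some_acc.
by constructor=> -[y _ | []]; exact: Some_acc.
Qed.

Lemma succ_lt_trans a b c : succ_lt a b -> succ_lt b c -> succ_lt a c.
Proof. by case: a b c => [x|] [y|] [z|] //=; exact: wlt_trans. Qed.

Lemma succ_lt_total a b : succ_lt a b \/ a = b \/ succ_lt b a.
Proof.
case: a b => [x|] [y|] /=; try tauto.
by case: (wlt_total x y) => [| [-> |]]; tauto.
Qed.

Definition succ_word : wordered := WOrd succ_lt_wf succ_lt_trans succ_lt_total.

End Successor.

Section LexSum.
Variables (I : countType) (Wf : I -> wordered).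

Definition lex_lt (a b : {i : I & wcar (Wf i)}) : Prop :=
  (choice.pickle (projT1 a) < choice.pickle (projT1 b))%N \/
  exists e : projT1 a = projT1 b,
    wlt (eq_rect _ (fun i => wcar (Wf i)) (projT2 a) _ e) (projT2 b).

Lemma lex_lt_tag i (x y : wcar (Wf i)) :
  wlt x y -> lex_lt (existT _ i x) (existT _ i y).
Proof. by move=> lt_xy; right; exists erefl. Qed.

Lemma lex_lt_wf : well_founded lex_lt.
Proof.
case=> i x; move: {2}(choice.pickle i) (erefl (choice.pickle i)) => n.
elim/ltn_ind: n i x => n IHn i x pi.
elim/(well_founded_ind (@wlt_wf (Wf i))): x => x IHx.
constructor=> -[j y] [/= lt_ji | [/= e]]; last by subst j; exact: IHx.
by apply: (IHn (choice.pickle j)); rewrite -?pi.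
Qed.

Lemma lex_lt_trans a b c : lex_lt a b -> lex_lt b c -> lex_lt a c.
Proof.
case: a b c => [i x] [j y] [k z] /= [lt_ij | [/= e_ij lt_xy]] [lt_jk | [/= e_jk lt_yz]].
- by left; exact: ltn_trans lt_jk.
- by subst k; left.
- by subst j; left.
- by subst j k; right; exists erefl; exact: wlt_trans lt_yz.
Qed.

Lemma lex_lt_total a b : lex_lt a b \/ a = b \/ lex_lt b a.
Proof.
case: a b => [i x] [j y].
case: (ltngtP (choice.pickle i) (choice.pickle j)) => [lt_ij | lt_ji | ].
- by left; left.
- by right; right; left.
move=> /(pcan_inj choice.pickleK) e_ij.
subst j; case: (wlt_total x y) => [lt_xy | [-> | lt_yx]].
- by left; exact: lex_lt_tag.
- by right; left.
- by right; right; exact: lex_lt_tag.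
Qed.

Definition lex_sum : wordered := WOrd lex_lt_wf lex_lt_trans lex_lt_total.

End LexSum.

Section RankGame.
Variables (L : lang) (F : fstruct L -> Prop) (T : countType) (X : rels L T).

Lemma rk_ge_intro (W : wordered) (w : wcar W) (S : {fset T}) :
  (forall u, wlt u w -> forall m : pext F X S,
     exists2 C, realizes m C & rk_ge F X C u) ->
  rk_ge F X S w.
Proof.
elim/(well_founded_ind (@wlt_wf W)): w S => w IH S ext.
have [[v pred_v] | no_pred] := classic (exists v, is_pred v w).
  by apply: (rk_geS pred_v) => m; have [C] := ext v (proj1 pred_v) m; exists C.
have [below | empty] := classic (exists v, wlt v w); last first.
  by apply: rk_ge0 => v lt_vw; apply: empty; exists v.
apply: rk_geL => // [v pred_v | v lt_vw]; first by apply: no_pred; exists v.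
by apply: IH => // u lt_uv; apply: ext; exact: wlt_trans lt_vw.
Qed.

Lemma rk_ge_elim (W : wordered) (w : wcar W) (S : {fset T}) :
  rk_ge F X S w ->
  forall u, wlt u w -> forall m : pext F X S,
    exists2 C, realizes m C & rk_ge F X C u.
Proof.
elim/(well_founded_ind (@wlt_wf W)): w S => w IH S rk_Sw u lt_uw m.
case: rk_Sw m IH lt_uw => {S w}
  [S w none | S v w [lt_vw pred_v] ext | S w _ no_pred all] m IH lt_uw.
- by case: (none u lt_uw).
- have [C [mC rk_Cv]] := ext m; exists C => //.
  case: (pred_v u lt_uw) => [-> // | lt_uv].
  apply: rk_ge_intro => u' lt_u'u; apply: (IH v lt_vw C rk_Cv).
  exact: wlt_trans lt_uv.
- have [x lt_xw lt_ux] := wlt_between lt_uw (no_pred u).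
  exact: IH lt_xw S (all x lt_xw) u lt_ux m.
Qed.

Lemma rk_ge_comap (W1 W2 : wordered) (g : wcar W1 -> wcar W2)
    (w1 : wcar W1) (w2 : wcar W2) (S : {fset T}) :
  (forall x y, wlt x y -> wlt (g x) (g y)) ->
  (forall u, wlt u w1 -> wlt (g u) w2) ->
  rk_ge F X S w2 -> rk_ge F X S w1.
Proof.
move=> g_mono.
elim/(well_founded_ind (@wlt_wf W1)): w1 w2 S => w1 IH w2 S g_below rk_Sw2.
apply: rk_ge_intro => u lt_uw1 m.
have [C mC rk_Cgu] := rk_ge_elim rk_Sw2 (g_below u lt_uw1) m.
by exists C => //; apply: (IH u lt_uw1 (g u)) => // u' /g_mono.
Qed.

Lemma rk_inf_realization (S : {fset T}) (m : pext F X S) :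
  rk_inf F X S -> exists2 C, realizes m C & rk_inf F X C.
Proof.
move=> S_inf; apply: NNPP => no_inf.
have [bound bound_spec] : exists bound : {fset T} -> {W : wordered & wcar W},
    forall C, realizes m C -> ~ rk_ge F X C (projT2 (bound C)).
  apply: (choice (fun C (Ww : {W : wordered & wcar W}) =>
    realizes m C -> ~ rk_ge F X C (projT2 Ww))) => C.
  have [mC | not_mC] := classic (realizes m C); last by exists (existT _ unit_word tt).
  have : ~ rk_inf F X C by move=> C_inf; apply: no_inf; exists C.
  by move=> /not_all_ex_not[W /not_all_ex_not[w not_rk]]; exists (existT _ W w).
pose top := succ_word (succ_word (lex_sum (fun C => projT1 (bound C)))).
have [C mC rk_C] := rk_ge_elim (S_inf top None) (u := Some None) I m.
apply: (bound_spec C mC).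
apply: (rk_ge_comap (g := fun x => Some (Some (existT _ C x)) : wcar top)) rk_C => //.
exact: lex_lt_tag.
Qed.

Lemma rk_inf_response : exists resp : forall P, pext F X P -> {fset T},
  forall P (m : pext F X P), rk_inf F X P ->
    realizes m (resp P m) /\ rk_inf F X (resp P m).
Proof.
pose good (Pm : {P & pext F X P}) C :=
  rk_inf F X (projT1 Pm) -> realizes (projT2 Pm) C /\ rk_inf F X C.
have [f f_good] : exists f, forall Pm, good Pm (f Pm).
  apply: choice => -[P m]; rewrite /good /=.
  have [P_inf | not_inf] := classic (rk_inf F X P); last by exists P.
  by have [C] := rk_inf_realization m P_inf; exists C.
by exists (fun P m => f (existT _ P m)) => P m; exact: f_good (existT _ P m).
Qed.

Lemma II_wins_of_rk_inf (S : {fset T}) : rk_inf F X S -> II_wins F X S.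
Proof.
move=> S_inf; have [resp resp_spec] := rk_inf_response.
pose sigma : strategyII F X S := fun P _ m => resp P m.
have consistent_inf P (h : hist F X S P) : consistent sigma h -> rk_inf F X P.
  by elim=> // P' h' m _ P'_inf; exact: (resp_spec P' m P'_inf).2.
by exists sigma => P h h_sigma m; exact: (resp_spec P m (consistent_inf P h h_sigma)).1.
Qed.

Lemma rk_ge_of_winningII (S : {fset T}) (sigma : strategyII F X S) :
  winningII sigma ->
  forall (W : wordered) (w : wcar W) P (h : hist F X S P),
    consistent sigma h -> rk_ge F X P w.
Proof.
move=> win W w; elim/(well_founded_ind (@wlt_wf W)): w => w IH P h h_sigma.
apply: rk_ge_intro => u lt_uw m; exists (sigma P h m); first exact: win.
exact: IH lt_uw _ _ (consS m h_sigma).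
Qed.

End RankGame.

Theorem proposition2p6 (L : lang) (F : fstruct L -> Prop)
  (hF : hereditary F) (iF : iso_closed F)
  (T : countType) (X : rels L T) (hX : in_sigmaF F X)
  (S : {fset T}) :
  rk_inf F X S <-> II_wins F X S.
Proof.
split; first exact: II_wins_of_rk_inf.
by case=> sigma win W w; exact: rk_ge_of_winningII win W w S (hist0 F X S) (cons0 sigma).
Qed.
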